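(* On any non-atomic probability space $(\mathbb{X},\mathcal{X},\mu)$ with an invertible measure-preserving ergodic transformation $T$, there exists a finite measurable function $f:\mathbb{X}\to\mathbb{R}$ such that, $\mu$-a.e., $$\limsup_n A_n^+f=+\infty,\qquad \liminf_n A_n^+f=-\infty,\qquad \lim_n A_n^-f=+\infty.$$
   Context: For measurable $f:\mathbb{X}\to\mathbb{R}$ and $n\ge1$: $A_n^+f=\frac1n\sum_{i=0}^{n-1}f\circ T^i$ and $A_n^-f=\frac1n\sum_{i=0}^{n-1}f\circ T^{-i}$. *)

From Stdlib Require Import Reals.
Open Scope R_scope.

Definition set (X : Type) := X -> Prop.

Definition sigma_algebra {X : Type} (M : set X -> Prop) : Prop :=
  M (fun _ => True) /\
  (forall A, M A -> M (fun x => ~ A x)) /\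
  (forall A : nat -> set X, (forall n, M (A n)) -> M (fun x => exists n, A n x)).

Definition probability_measure {X : Type} (M : set X -> Prop) (mu : set X -> R) : Prop :=
  (forall A, M A -> 0 <= mu A) /\
  mu (fun _ => True) = 1 /\
  (forall A : nat -> set X,
     (forall n, M (A n)) ->
     (forall i j x, i <> j -> A i x -> A j x -> False) ->
     infinite_sum (fun n => mu (A n)) (mu (fun x => exists n, A n x))).

Definition non_atomic {X : Type} (M : set X -> Prop) (mu : set X -> R) : Prop :=
  forall A, M A -> 0 < mu A ->
    exists B, M B /\ (forall x, B x -> A x) /\ 0 < mu B /\ mu B < mu A.

Definition measurable_map {X : Type} (M : set X -> Prop) (T : X -> X) : Prop :=
  forall A, M A -> M (fun x => A (T x)).

Definition invertible_with {X : Type} (M : set X -> Prop) (T Tinv : X -> X) : Prop :=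
  (forall x, T (Tinv x) = x) /\ (forall x, Tinv (T x) = x) /\
  measurable_map M T /\ measurable_map M Tinv.

Definition measure_preserving {X : Type} (M : set X -> Prop) (mu : set X -> R) (T : X -> X) : Prop :=
  forall A, M A -> mu (fun x => A (T x)) = mu A.

Definition ergodic {X : Type} (M : set X -> Prop) (mu : set X -> R) (T : X -> X) : Prop :=
  forall A, M A -> (forall x, A (T x) <-> A x) -> mu A = 0 \/ mu A = 1.

Definition measurable_fun {X : Type} (M : set X -> Prop) (f : X -> R) : Prop :=
  forall a : R, M (fun x => f x <= a).

Definition ae {X : Type} (M : set X -> Prop) (mu : set X -> R) (P : X -> Prop) : Prop :=
  exists N, M N /\ mu N = 0 /\ forall x, ~ N x -> P x.

Fixpoint birk_sum {X : Type} (S : X -> X) (f : X -> R) (n : nat) (x : X) : R :=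
  match n with
  | O => 0
  | Datatypes.S k => birk_sum S f k x + f (Nat.iter k S x)
  end.

(* ergodic average (1/n) sum_{i<n} f (S^i x); A_n^+ with S = T, A_n^- with S = T^{-1} *)
Definition avg {X : Type} (S : X -> X) (f : X -> R) (n : nat) (x : X) : R :=
  birk_sum S f n x / INR n.

(* Using non-atomicity, cut out disjoint sets E_k of positive measure at most
   2^-(k+1), and a set Z of positive measure disjoint from all of them.  Mark a
   point at level k when it lies in E_k, or when the time since its backward
   orbit last visited E_k is a positive multiple of 2^(k+1).  The level-k marks
   have measure at most 2^-k, so by Borel-Cantelli the weight
   P = mark_weight = sum_k (k+1) 2^(k+1) [marked at level k]
   is finite almost everywhere; yet every window of 2^(k+1) consecutive points
   of an orbit that has met E_k carries a level-k mark, so the averages of P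
   along backward and forward orbits tend to +oo.

   Take f = P + G - G o T with G = transfer: G y = 0 unless T y lies in some
   E_j, in which case G y = m^2 + (P-mass of the m points before y), m being
   the time since the backward orbit of y last met the union of the E_i, i >= j.
   As G >= 0, the backward averages of f still tend to +oo.  The forward
   Birkhoff sum up to n is (P-sum) + G x - G (T^n x): just before a visit to Z
   it is the P-sum, while just before the first visit to a sufficiently deep
   level it is at most G x - n^2.  Ergodicity of T and T^-1 supplies all the
   visits needed. *)

From Stdlib Require Import Reals Lra Lia Arith Classical ClassicalEpsilon FunctionalExtensionality PropExtensionality.
Open Scope R_scope.

Lemma set_ext {X : Type} (A B : set X) : (forall x, A x <-> B x) -> A = B.
Proof.
  intros H; apply functional_extensionality; intro x; apply propositional_extensionality; auto.
Qed.

Lemma ex_least (Q : nat -> Prop) :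
  (exists n, Q n) -> exists n, Q n /\ forall q, (q < n)%nat -> ~ Q q.
Proof.
  intros [n Hn]; induction n as [n IH] using (well_founded_induction lt_wf).
  destruct (classic (exists q, (q < n)%nat /\ Q q)) as [[q [Hqn Hq]] | Hnone].
  - exact (IH q Hqn Hq).
  - exists n; split; auto. intros q Hqn Hq; apply Hnone; eauto.
Qed.

Definition nat_min (Q : nat -> Prop) : nat :=
  match excluded_middle_informative (exists n, Q n) with
  | left H => proj1_sig (constructive_indefinite_description _ (ex_least Q H))
  | right _ => O
  end.

Lemma nat_min_spec (Q : nat -> Prop) :
  (exists n, Q n) -> Q (nat_min Q) /\ forall q, (q < nat_min Q)%nat -> ~ Q q.
Proof.
  intro H; unfold nat_min; destruct (excluded_middle_informative _); [|contradiction].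
  destruct (constructive_indefinite_description _ _); auto.
Qed.

Lemma nat_min_eq (Q : nat -> Prop) p :
  Q p -> (forall q, (q < p)%nat -> ~ Q q) -> nat_min Q = p.
Proof.
  intros Hp Hmin; destruct (nat_min_spec Q ltac:(eauto)) as [H1 H2].
  destruct (Nat.lt_total (nat_min Q) p) as [Hl|[Hl|Hl]]; auto.
  - exfalso; exact (Hmin _ Hl H1).
  - exfalso; exact (H2 _ Hl Hp).
Qed.

Lemma nat_min_none (Q : nat -> Prop) : ~ (exists n, Q n) -> nat_min Q = O.
Proof. intro H; unfold nat_min; destruct (excluded_middle_informative _); tauto. Qed.

Definition indicator (P : Prop) : nat := if excluded_middle_informative P then 1%nat else O.

Lemma iter_cancel {A : Type} (f g : A -> A) k x :
  (forall y, g (f y) = y) -> Nat.iter k g (Nat.iter k f x) = x.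
Proof.
  intro Hgf; revert x; induction k as [|k IH]; intro x; simpl; auto.
  rewrite <- Nat.iter_swap, Hgf; auto.
Qed.

Lemma infinite_sum_le (a : nat -> R) l S :
  infinite_sum a l -> (forall n, sum_f_R0 a n <= S) -> l <= S.
Proof.
  intros Hl HS; apply Rnot_lt_le; intro HSl.
  destruct (Hl (l - S)) as [N HN]; [lra|].
  specialize (HN N (le_n _)); specialize (HS N); unfold Rdist in HN.
  apply Rabs_def2 in HN; lra.
Qed.

Lemma infinite_sum_eventually_const (a : nat -> R) N c :
  (forall n, (N <= n)%nat -> sum_f_R0 a n = c) -> infinite_sum a c.
Proof.
  intros H eps Heps; exists N; intros n Hn.
  rewrite H by auto; unfold Rdist; rewrite Rminus_diag, Rabs_R0; lra.
Qed.

Lemma infinite_sum_const_self (c : R) : infinite_sum (fun _ => c) c -> c = 0.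
Proof.
  intros Hc; destruct (Req_dec c 0) as [|Hc0]; auto.
  assert (Hpos : 0 < Rabs c) by (apply Rabs_pos_lt; auto).
  destruct (Hc (Rabs c) Hpos) as [N HN].
  specialize (HN (S N) (le_S _ _ (le_n _))); unfold Rdist in HN.
  rewrite sum_cte, S_INR, (S_INR N) in HN.
  replace (c * (INR N + 1 + 1) - c) with (c * (INR N + 1)) in HN by ring.
  rewrite Rabs_mult, (Rabs_pos_eq (INR N + 1)) in HN by (pose proof (pos_INR N); lra).
  pose proof (pos_INR N); nra.
Qed.

Lemma geometric_tail_le K N : sum_f_R0 (fun n => (1/2) ^ (K + n)) N <= 2 * (1/2) ^ K.
Proof.
  rewrite (sum_eq _ (fun n => (1/2) ^ n * (1/2) ^ K)) by (intros; rewrite pow_add; ring).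
  rewrite <- scal_sum, tech3 by lra.
  assert (0 <= (1/2) ^ S N) by (apply pow_le; lra).
  assert (0 <= (1/2) ^ K) by (apply pow_le; lra).
  replace ((1 - (1/2) ^ S N) / (1 - 1/2)) with (2 * (1 - (1/2) ^ S N)) by field; nra.
Qed.

Lemma exists_nat_ge (K : R) : exists k : nat, K <= INR k.
Proof. destruct (INR_archimed 1 K ltac:(lra)) as [n Hn]; exists n; lra. Qed.

Lemma avg_gt {X : Type} (S : X -> X) (f : X -> R) n x K :
  (1 <= n)%nat -> K * INR n < birk_sum S f n x -> K < avg S f n x.
Proof.
  intros Hn H; unfold avg; pose proof (lt_INR 0 n Hn); simpl INR in *.
  apply (Rmult_lt_reg_r (INR n)); auto; unfold Rdiv; rewrite Rmult_assoc, Rinv_l; lra.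
Qed.

Lemma avg_lt {X : Type} (S : X -> X) (f : X -> R) n x K :
  (1 <= n)%nat -> birk_sum S f n x < K * INR n -> avg S f n x < K.
Proof.
  intros Hn H; unfold avg; pose proof (lt_INR 0 n Hn); simpl INR in *.
  apply (Rmult_lt_reg_r (INR n)); auto; unfold Rdiv; rewrite Rmult_assoc, Rinv_l; lra.
Qed.

Fixpoint nsum (g : nat -> nat) (n : nat) : nat :=
  match n with O => O | S k => (nsum g k + g k)%nat end.

Lemma nsum_ext (g1 g2 : nat -> nat) n :
  (forall i, (i < n)%nat -> g1 i = g2 i) -> nsum g1 n = nsum g2 n.
Proof. induction n; simpl; intros; auto. rewrite IHn, H; auto. Qed.

Lemma nsum_add (g : nat -> nat) a b :
  nsum g (a + b) = (nsum g a + nsum (fun i => g (a + i)%nat) b)%nat.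
Proof.
  induction b as [|b IH]; [simpl; rewrite Nat.add_0_r; lia|].
  rewrite Nat.add_succ_r; simpl; rewrite IH; lia.
Qed.

Lemma nsum_rev (g : nat -> nat) n : nsum g n = nsum (fun i => g (n - 1 - i)%nat) n.
Proof.
  induction n as [|n IH]; auto.
  change (nsum g n + g n = nsum (fun i => g (S n - 1 - i)%nat) (1 + n))%nat.
  rewrite IH, nsum_add, Nat.add_comm; simpl nsum at 2; f_equal.
  - f_equal; lia.
  - apply nsum_ext; intros i Hi; f_equal; lia.
Qed.

Lemma nsum_ge_term (g : nat -> nat) n i : (i < n)%nat -> (g i <= nsum g n)%nat.
Proof.
  induction n as [|n IH]; simpl; intros Hi; [lia|].
  destruct (Nat.eq_dec i n) as [->|]; [lia|]. specialize (IH ltac:(lia)); lia.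
Qed.

Lemma nsum_mono (g : nat -> nat) n n' : (n <= n')%nat -> (nsum g n <= nsum g n')%nat.
Proof. induction 1; simpl; lia. Qed.

(** * Measure-theoretic preliminaries *)

Section Measure.
Variables (X : Type) (M : set X -> Prop) (mu : set X -> R).
Hypothesis HM : sigma_algebra M.
Hypothesis Hmu : probability_measure M mu.

Lemma M_ext (A B : set X) : M A -> (forall x, A x <-> B x) -> M B.
Proof. intros HA H; rewrite <- (set_ext A B H); auto. Qed.

Lemma M_True : M (fun _ => True).
Proof. apply HM. Qed.

Lemma M_not (A : set X) : M A -> M (fun x => ~ A x).
Proof. apply HM. Qed.

Lemma M_exists (A : nat -> set X) : (forall n, M (A n)) -> M (fun x => exists n, A n x).
Proof. apply HM. Qed.

Lemma M_const (P : Prop) : M (fun _ => P).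
Proof.
  destruct (classic P) as [HP|HP].
  - apply (M_ext _ _ M_True); tauto.
  - apply (M_ext _ _ (M_not _ M_True)); tauto.
Qed.

Lemma M_forall (A : nat -> set X) : (forall n, M (A n)) -> M (fun x => forall n, A n x).
Proof.
  intros HA; apply (M_ext (fun x => ~ exists n, ~ A n x)).
  - apply M_not, M_exists; intro n; apply M_not, HA.
  - intro x; split.
    + intros Hx n; apply NNPP; intro Hn; apply Hx; eauto.
    + intros Hx [n Hn]; auto.
Qed.

Lemma M_or (A B : set X) : M A -> M B -> M (fun x => A x \/ B x).
Proof.
  intros HA HB; apply (M_ext (fun x => exists n, (if Nat.eqb n 0 then A else B) x)).
  - apply M_exists; intros [|n]; auto.
  - intro x; split.
    + intros [[|n] Hn]; auto.
    + intros [H|H]; [exists O | exists 1%nat]; auto.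
Qed.

Lemma M_and (A B : set X) : M A -> M B -> M (fun x => A x /\ B x).
Proof.
  intros HA HB; apply (M_ext (fun x => ~ (~ A x \/ ~ B x))).
  - apply M_not, M_or; apply M_not; auto.
  - intro x; tauto.
Qed.

Lemma M_impl (A B : set X) : M A -> M B -> M (fun x => A x -> B x).
Proof.
  intros HA HB; apply (M_ext (fun x => ~ A x \/ B x)).
  - apply M_or; [apply M_not|]; auto.
  - intro x; tauto.
Qed.

Create HintDb measurable.

Ltac measurable :=
  repeat first
    [ solve [eauto with measurable]
    | apply M_and | apply M_or | apply M_not | apply M_impl | apply M_const
    | apply M_exists; intro | apply M_forall; intro ].

Lemma mu_ge0 (A : set X) : M A -> 0 <= mu A.
Proof. apply Hmu. Qed.

Lemma mu_ext (A B : set X) : (forall x, A x <-> B x) -> mu A = mu B.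
Proof. intro H; rewrite (set_ext A B H); auto. Qed.

Lemma mu_empty : mu (fun _ => False) = 0.
Proof.
  apply infinite_sum_const_self.
  destruct Hmu as [_ [_ Hadd]].
  pose proof (Hadd (fun _ _ => False) (fun _ => M_const False) ltac:(tauto)) as H; cbv beta in H.
  rewrite (mu_ext (fun x => exists n : nat, False) (fun _ => False)) in H
    by (intro; split; [intros [_ []] | tauto]).
  exact H.
Qed.

Lemma mu_finite_union (A : nat -> set X) N :
  (forall n, M (A n)) ->
  (forall i j x, (i <= N)%nat -> (j <= N)%nat -> i <> j -> A i x -> A j x -> False) ->
  mu (fun x => exists n, (n <= N)%nat /\ A n x) = sum_f_R0 (fun n => mu (A n)) N.
Proof.
  intros HA Hdis.
  set (B := fun n x => (n <= N)%nat /\ A n x).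
  assert (HB : infinite_sum (fun n => mu (B n)) (mu (fun x => exists n, B n x))).
  { destruct Hmu as [_ [_ Hadd]]; apply Hadd.
    - intro n; unfold B; measurable.
    - intros i j x Hij [Hi Hix] [Hj Hjx]; eauto. }
  apply (uniqueness_sum _ _ _ HB), (infinite_sum_eventually_const _ N).
  intros n Hn; induction Hn as [|n Hn IH].
  - apply sum_eq; intros i Hi; apply mu_ext; unfold B; tauto.
  - rewrite tech5, IH; replace (mu (B (S n))) with 0; [ring|].
    rewrite <- mu_empty; apply mu_ext; unfold B; intro; lia.
Qed.

Lemma mu_union2 (A B : set X) :
  M A -> M B -> (forall x, A x -> B x -> False) -> mu (fun x => A x \/ B x) = mu A + mu B.
Proof.
  intros HA HB Hdis.
  pose proof (mu_finite_union (fun n => if Nat.eqb n 0 then A else B) 1) as H; simpl in H.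
  rewrite <- H.
  - apply mu_ext; intro x; split.
    + intros [Hx|Hx]; [exists O | exists 1%nat]; auto.
    + intros [[|[|n]] [Hn Hx]]; auto; lia.
  - intros [|n]; auto.
  - intros [|[|i]] [|[|j]] x Hi Hj Hij; simpl; try lia; eauto.
Qed.

Lemma mu_diff (A B : set X) :
  M A -> M B -> (forall x, B x -> A x) -> mu (fun x => A x /\ ~ B x) = mu A - mu B.
Proof.
  intros HA HB HBA.
  rewrite (mu_ext A (fun x => B x \/ (A x /\ ~ B x))), mu_union2; try ring; try measurable.
  - intros x ? [? ?]; auto.
  - intro x; split; [|intros [|[]]; auto]. intro; destruct (classic (B x)); auto.
Qed.

Lemma mu_mono (A B : set X) : M A -> M B -> (forall x, A x -> B x) -> mu A <= mu B.
Proof.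
  intros HA HB HAB.
  assert (HD : M (fun x => B x /\ ~ A x)) by measurable.
  pose proof (mu_diff B A HB HA HAB); pose proof (mu_ge0 _ HD); lra.
Qed.

Lemma mu_le1 (A : set X) : M A -> mu A <= 1.
Proof.
  intro HA; destruct Hmu as [_ [H1 _]]; rewrite <- H1.
  apply mu_mono; auto; apply M_True.
Qed.

Lemma mu_compl (A : set X) : M A -> mu (fun x => ~ A x) = 1 - mu A.
Proof.
  intro HA; destruct Hmu as [_ [H1 _]]; rewrite <- H1, <- mu_diff; auto using M_True.
  apply mu_ext; tauto.
Qed.

Lemma mu_union_le (A B : set X) : M A -> M B -> mu (fun x => A x \/ B x) <= mu A + mu B.
Proof.
  intros HA HB.
  rewrite (mu_ext _ (fun x => A x \/ (B x /\ ~ A x))), mu_union2; try measurable.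
  - pose proof (mu_mono (fun x => B x /\ ~ A x) B ltac:(measurable) HB ltac:(intros x [? ?]; auto)); lra.
  - intros x ? [? ?]; auto.
  - intro x; split; [intros [|]; auto; destruct (classic (A x)); auto | intros [|[]]; auto].
Qed.

Lemma mu_countable_subadd (A : nat -> set X) S :
  (forall n, M (A n)) -> (forall N, sum_f_R0 (fun n => mu (A n)) N <= S) ->
  mu (fun x => exists n, A n x) <= S.
Proof.
  intros HA HS.
  set (D := fun n x => A n x /\ ~ exists i, (i < n)%nat /\ A i x).
  assert (HD : forall n, M (D n)) by (intro n; unfold D; measurable).
  assert (Hdis : forall i j x, i <> j -> D i x -> D j x -> False).
  { intros i j x Hij [Hi Ni] [Hj Nj].
    destruct (Nat.lt_ge_cases i j); [apply Nj | apply Ni; exists j; split; [lia|]]; eauto. }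
  rewrite (mu_ext _ (fun x => exists n, D n x)).
  - destruct Hmu as [_ [_ Hadd]]; apply (infinite_sum_le _ _ _ (Hadd D HD Hdis)).
    intro N; eapply Rle_trans; [|apply (HS N)].
    apply sum_Rle; intros n _; apply mu_mono; auto; intros x [? ?]; auto.
  - intro x; split; [|intros [n [Hn _]]; eauto].
    intro Hx; destruct (ex_least _ Hx) as [n [Hn Hmin]].
    exists n; split; auto; intros [i [Hi Hai]]; eapply Hmin; eauto.
Qed.

Lemma mu_null_union (A : nat -> set X) :
  (forall n, M (A n)) -> (forall n, mu (A n) = 0) -> mu (fun x => exists n, A n x) = 0.
Proof.
  intros HA H0; apply Rle_antisym; [|apply mu_ge0; measurable].
  apply mu_countable_subadd; auto; intro N.
  rewrite (sum_eq _ (fun _ => 0)) by auto; induction N; simpl; lra.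
Qed.

Lemma mu_decreasing_inter (U : nat -> set X) :
  (forall N, M (U N)) -> (forall N x, U (S N) x -> U N x) -> (forall N, mu (U N) = mu (U O)) ->
  mu (fun x => forall N, U N x) = mu (U O).
Proof.
  intros HU Hdec Hconst.
  assert (Hsub : forall N x, U N x -> U O x) by (induction N; auto).
  assert (Hgap : mu (fun x => U O x /\ ~ forall N, U N x) = 0).
  { rewrite (mu_ext _ (fun x => exists N, U N x /\ ~ U (S N) x)).
    - apply mu_null_union; [intro; measurable|].
      intro N; rewrite mu_diff, Hconst, (Hconst (S N)); auto; lra.
    - intro x; split.
      + intros [H0 HnF]; apply not_all_ex_not in HnF; destruct HnF as [N HN].
        induction N as [|N IH]; [contradiction|].
        destruct (classic (U N x)); eauto.
      + intros [N [H1 H2]]; split; eauto. }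
  rewrite mu_diff in Hgap; auto; [lra | apply M_forall; auto].
Qed.

Lemma ae_impl (P Q : X -> Prop) : ae M mu P -> (forall x, P x -> Q x) -> ae M mu Q.
Proof. intros [N [HN [H0 HP]]] H; exists N; auto. Qed.

Lemma ae_of_mu1 (A : set X) : M A -> mu A = 1 -> ae M mu A.
Proof.
  intros HA H1; exists (fun x => ~ A x); repeat split; [measurable | rewrite mu_compl by auto; lra |].
  intros x Hx; apply NNPP, Hx.
Qed.

Lemma ae_forall (P : nat -> X -> Prop) :
  (forall k, ae M mu (P k)) -> ae M mu (fun x => forall k, P k x).
Proof.
  intros H; destruct (choice (fun k N => M N /\ mu N = 0 /\ forall x, ~ N x -> P k x) H)
    as [N HN].
  exists (fun x => exists k, N k x); repeat split.
  - apply M_exists; intro k; apply HN.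
  - apply mu_null_union; intro k; apply HN.
  - intros x Hx k; apply HN; intro; apply Hx; eauto.
Qed.

Lemma ae_and (P Q : X -> Prop) : ae M mu P -> ae M mu Q -> ae M mu (fun x => P x /\ Q x).
Proof.
  intros HP HQ.
  apply (ae_impl (fun x => forall k : nat, if Nat.eqb k 0 then P x else Q x)).
  - apply ae_forall; intros [|k]; auto.
  - intros x H; exact (conj (H O) (H 1%nat)).
Qed.

Lemma M_iter_pre (f : X -> X) k (A : set X) :
  measurable_map M f -> M A -> M (fun x => A (Nat.iter k f x)).
Proof.
  intros Hf; revert A; induction k as [|k IH]; intros A HA; simpl; auto.
  apply (IH (fun y => A (f y))), Hf, HA.
Qed.

Lemma mu_iter_pre (f : X -> X) k (A : set X) :
  measurable_map M f -> measure_preserving M mu f -> M A ->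
  mu (fun x => A (Nat.iter k f x)) = mu A.
Proof.
  intros Hf Hp; revert A; induction k as [|k IH]; intros A HA; simpl; auto.
  rewrite (IH (fun y => A (f y))); auto.
Qed.

Lemma ergodic_recurrence (f : X -> X) (A : set X) :
  measurable_map M f -> measure_preserving M mu f -> ergodic M mu f -> M A -> 0 < mu A ->
  ae M mu (fun x => forall N, exists t, (N <= t)%nat /\ A (Nat.iter t f x)).
Proof.
  intros Hf Hp Herg HA Hpos.
  set (U := fun N x => exists t, (N <= t)%nat /\ A (Nat.iter t f x)).
  assert (HU : forall N, M (U N)).
  { intro N; unfold U; measurable; apply M_iter_pre; auto. }
  assert (Hshift : forall N x, U (S N) x <-> U N (f x)).
  { intros N x; unfold U; split.
    - intros [[|t] [Ht Hx]]; [lia|]; rewrite Nat.iter_succ_r in Hx; exists t; split; auto; lia.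
    - intros [t [Ht Hx]]; exists (S t); rewrite Nat.iter_succ_r; split; auto; lia. }
  assert (Hconst : forall N, mu (U N) = mu (U O)).
  { induction N as [|N IH]; auto.
    rewrite (mu_ext _ (fun x => U N (f x)) (Hshift N)), Hp; auto. }
  assert (Hdec : forall N x, U (S N) x -> U N x).
  { intros N x [t [Ht Hx]]; exists t; split; auto; lia. }
  assert (HF : M (fun x => forall N, U N x)) by (apply M_forall; auto).
  assert (HmuF : mu (fun x => forall N, U N x) = mu (U O)) by (apply mu_decreasing_inter; auto).
  assert (HAU : mu A <= mu (U O)).
  { apply mu_mono; auto; intros x Hx; exists O; split; auto. }
  destruct (Herg _ HF) as [H0 | H1].
  - intro x; split; intros Hx N; [apply Hdec, Hshift, Hx | apply Hshift, Hx].
  - lra.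
  - exact (ae_of_mu1 _ HF H1).
Qed.

Lemma ae_iter_pre (f : X -> X) (P : X -> Prop) k :
  measurable_map M f -> measure_preserving M mu f -> ae M mu P -> ae M mu (fun x => P (Nat.iter k f x)).
Proof.
  intros Hf Hp [N [HN [H0 HP]]]; exists (fun x => N (Nat.iter k f x)); repeat split.
  - apply M_iter_pre; auto.
  - rewrite mu_iter_pre; auto.
  - intros x Hx; apply HP, Hx.
Qed.

Definition nat_measurable (h : X -> nat) : Prop := forall v, M (fun x => h x = v).

Lemma nat_measurable_nat_min (Q : X -> nat -> Prop) :
  (forall n, M (fun x => Q x n)) -> nat_measurable (fun x => nat_min (Q x)).
Proof.
  intros HQ v; apply (M_ext (fun x => (Q x v /\ forall q, (q < v)%nat -> ~ Q x q)
                                   \/ (v = O /\ forall n, ~ Q x n))).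
  - measurable.
  - intro x; split.
    + intros [[H1 H2] | [-> H]]; [apply nat_min_eq; auto | apply nat_min_none; firstorder].
    + intros <-; destruct (classic (exists n, Q x n)) as [Hx|Hx].
      * left; apply nat_min_spec, Hx.
      * right; split; [apply nat_min_none, Hx | firstorder].
Qed.

Lemma nat_measurable_const c : nat_measurable (fun _ => c).
Proof. intro v; apply M_const. Qed.

Lemma nat_measurable_iter (f : X -> X) (h : X -> nat) k :
  measurable_map M f -> nat_measurable h -> nat_measurable (fun x => h (Nat.iter k f x)).
Proof. intros Hf Hh v; apply (M_iter_pre f k (fun y => h y = v)); auto. Qed.

Lemma nat_measurable_index (g : X -> nat) (h : nat -> X -> nat) :
  nat_measurable g -> (forall j, nat_measurable (h j)) -> nat_measurable (fun x => h (g x) x).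
Proof.
  intros Hg Hh v; apply (M_ext (fun x => exists j, g x = j /\ h j x = v)).
  - apply M_exists; intro j; apply M_and; [apply Hg | apply Hh].
  - intro x; split; [intros [j [<- H]]; auto | eauto].
Qed.

Lemma nat_measurable_op (op : nat -> nat -> nat) (h1 h2 : X -> nat) :
  nat_measurable h1 -> nat_measurable h2 -> nat_measurable (fun x => op (h1 x) (h2 x)).
Proof.
  intros H1 H2; apply (nat_measurable_index h1 (fun a x => op a (h2 x))); auto.
  intro a; apply (nat_measurable_index h2 (fun b _ => op a b)); auto.
  intro b; apply nat_measurable_const.
Qed.

Lemma nat_measurable_nsum (g : nat -> X -> nat) n :
  (forall i, nat_measurable (g i)) -> nat_measurable (fun x => nsum (fun i => g i x) n).
Proof.
  intros Hg; induction n as [|n IH]; [intro v; simpl; apply M_const|].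
  apply (nat_measurable_op Nat.add); auto.
Qed.

Lemma measurable_fun_const (c : R) : measurable_fun M (fun _ => c).
Proof. intro a; apply M_const. Qed.

Lemma measurable_fun_index (g : X -> nat) (F : nat -> X -> R) :
  nat_measurable g -> (forall n, measurable_fun M (F n)) -> measurable_fun M (fun x => F (g x) x).
Proof.
  intros Hg HF a; apply (M_ext (fun x => exists n, g x = n /\ F n x <= a)).
  - apply M_exists; intro n; apply M_and; [apply Hg | apply HF].
  - intro x; split; [intros [n [<- H]]; auto | eauto].
Qed.

Lemma nat_measurable_indicator (A : set X) : M A -> nat_measurable (fun x => indicator (A x)).
Proof.
  intros HA v; apply (M_ext (fun x => (A x /\ v = 1%nat) \/ (~ A x /\ v = O))).
  - measurable.
  - intro x; unfold indicator; destruct (excluded_middle_informative (A x)); intuition.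
Qed.

Lemma mu_disjoint_copies (A : nat -> set X) N a :
  (forall n, M (A n)) -> (forall n, mu (A n) = a) ->
  (forall i j x, (i <= N)%nat -> (j <= N)%nat -> i <> j -> A i x -> A j x -> False) ->
  INR (S N) * a <= 1.
Proof.
  intros HA Ha Hdis.
  rewrite Rmult_comm, <- sum_cte, <- (sum_eq (fun n => mu (A n))) by auto.
  rewrite <- mu_finite_union by auto; apply mu_le1; measurable.
Qed.

Lemma borel_cantelli_geometric (A : nat -> set X) :
  (forall k, M (A k)) -> (forall k, mu (A k) <= (1/2) ^ k) ->
  ae M mu (fun x => exists K, forall k, (K <= k)%nat -> ~ A k x).
Proof.
  intros HA Hsmall.
  set (Bad := fun x => ~ exists K, forall k, (K <= k)%nat -> ~ A k x).
  assert (HBad : M Bad) by (unfold Bad; measurable).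
  assert (Htail : forall K, mu Bad <= 2 * (1/2) ^ K).
  { intro K; eapply Rle_trans.
    - apply (mu_mono _ (fun x => exists n, A (K + n)%nat x)); auto; [measurable|].
      intros x Hx; apply NNPP; intro Hn; apply Hx; exists K; intros k Hk Hkx; apply Hn.
      exists (k - K)%nat; replace (K + (k - K))%nat with k by lia; auto.
    - apply mu_countable_subadd; auto; intro N.
      eapply Rle_trans; [|apply (geometric_tail_le K N)].
      apply sum_Rle; intros; auto. }
  exists Bad; repeat split; [auto| |intros x Hx; apply NNPP, Hx].
  apply Rle_antisym; [|apply mu_ge0; auto].
  apply Rnot_lt_le; intro Hpos.
  destruct (pow_lt_1_zero (1/2) ltac:(rewrite Rabs_pos_eq; lra) (mu Bad / 2) ltac:(lra))
    as [N HN].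
  specialize (HN N (le_n _)); specialize (Htail N).
  rewrite Rabs_pos_eq in HN by (apply pow_le; lra); lra.
Qed.

Section NonAtomic.
Hypothesis Hna : non_atomic M mu.

Lemma non_atomic_half (A : set X) :
  M A -> 0 < mu A -> exists B, M B /\ (forall x, B x -> A x) /\ 0 < mu B /\ mu B <= mu A / 2.
Proof.
  intros HA Hpos; destruct (Hna A HA Hpos) as [B [HB [HBA [HB0 HBA']]]].
  destruct (Rle_dec (mu B) (mu A / 2)) as [Hle|Hgt]; [exists B; auto|].
  exists (fun x => A x /\ ~ B x); rewrite mu_diff by auto.
  repeat split; [measurable | intros x [? ?]; auto | lra | lra].
Qed.

Definition halve (A : set X) : set X :=
  epsilon (inhabits A) (fun B => M B /\ (forall x, B x -> A x) /\ 0 < mu B /\ mu B <= mu A / 2).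

Lemma halve_spec (A : set X) : M A -> 0 < mu A ->
  M (halve A) /\ (forall x, halve A x -> A x) /\ 0 < mu (halve A) /\ mu (halve A) <= mu A / 2.
Proof.
  intros HA Hpos; apply (epsilon_spec (inhabits A) (fun B => M B /\ (forall x, B x -> A x) /\
    0 < mu B /\ mu B <= mu A / 2)), non_atomic_half; auto.
Qed.

Definition halving_chain (k : nat) : set X := Nat.iter (S k) halve (fun _ => True).

Lemma halving_chain_spec k :
  M (halving_chain k) /\ 0 < mu (halving_chain k) /\ mu (halving_chain k) <= (1/2) ^ S k.
Proof.
  destruct Hmu as [_ [H1 _]].
  induction k as [|k [HD [HD0 HD1]]].
  - destruct (halve_spec _ M_True ltac:(lra)) as [? [_ [? ?]]].
    change (halving_chain O) with (halve (fun _ => True)).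
    repeat split; auto; simpl pow; lra.
  - destruct (halve_spec _ HD HD0) as [? [_ [? ?]]].
    change (halving_chain (S k)) with (halve (halving_chain k)).
    repeat split; auto; simpl pow in *; lra.
Qed.

Lemma halving_chain_succ_spec k :
  (forall x, halving_chain (S k) x -> halving_chain k x) /\
  mu (halving_chain (S k)) <= mu (halving_chain k) / 2.
Proof.
  destruct (halving_chain_spec k) as [HD [HD0 _]].
  destruct (halve_spec _ HD HD0) as [_ [? [_ ?]]]; auto.
Qed.

Lemma halving_chain_antitone i j x : (i <= j)%nat -> halving_chain j x -> halving_chain i x.
Proof. induction 1; auto; intro; apply IHle, halving_chain_succ_spec; auto. Qed.

Lemma non_atomic_small_disjoint_sets : exists (E : nat -> set X) (Z : set X),
  (forall k, M (E k)) /\ (forall k, 0 < mu (E k)) /\ (forall k, mu (E k) <= (1/2) ^ S k) /\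
  (forall i j x, i <> j -> E i x -> E j x -> False) /\
  M Z /\ 0 < mu Z /\ (forall k x, E k x -> Z x -> False).
Proof.
  exists (fun k x => halving_chain k x /\ ~ halving_chain (S k) x), (fun x => ~ halving_chain O x).
  pose proof halving_chain_spec as HD.
  assert (HDsub : forall k x, halving_chain k x -> halving_chain O x)
    by (intros k x; apply halving_chain_antitone; lia).
  repeat split.
  - intro k; measurable; apply HD.
  - intro k; destruct (HD k) as [? [? _]]; destruct (HD (S k)) as [? _].
    destruct (halving_chain_succ_spec k); rewrite mu_diff by auto; lra.
  - intro k; destruct (HD k) as [? [_ ?]]; destruct (HD (S k)) as [? _].
    eapply Rle_trans; [apply (mu_mono _ (halving_chain k))|]; auto.
    + measurable.
    + intros x [? ?]; auto.
  - intros i j x Hij [Hi Ni] [Hj Nj].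
    destruct (proj1 (Nat.lt_gt_cases i j) Hij) as [Hlt|Hlt];
      [apply Ni | apply Nj]; eapply halving_chain_antitone; eauto.
  - measurable; apply HD.
  - destruct (HD O) as [? [_ ?]]; rewrite mu_compl by auto; simpl in *; lra.
  - intros k x [Hk _]; eauto.
Qed.
End NonAtomic.

Section Invertible.
Variables (T Tinv : X -> X).
Hypothesis HT : invertible_with M T Tinv.
Hypothesis Hmp : measure_preserving M mu T.
Hypothesis Herg : ergodic M mu T.

Lemma T_meas : measurable_map M T.
Proof. apply HT. Qed.

Lemma Tinv_meas : measurable_map M Tinv.
Proof. apply HT. Qed.

Lemma Tinv_preserving : measure_preserving M mu Tinv.
Proof.
  intros A HA; rewrite <- (Hmp (fun x => A (Tinv x))) by (apply Tinv_meas; auto).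
  apply mu_ext; intro x; destruct HT as [_ [-> _]]; tauto.
Qed.

Lemma Tinv_ergodic : ergodic M mu Tinv.
Proof.
  intros A HA Hinv; apply Herg; auto; intro x.
  rewrite <- (Hinv (T x)); destruct HT as [_ [-> _]]; tauto.
Qed.

Lemma iter_Tinv_T_le s t x :
  (s <= t)%nat -> Nat.iter t Tinv (Nat.iter s T x) = Nat.iter (t - s) Tinv x.
Proof.
  intro H; replace (Nat.iter t Tinv _) with (Nat.iter (t - s + s) Tinv (Nat.iter s T x))
    by (f_equal; lia).
  rewrite Nat.iter_add, iter_cancel; auto; apply HT.
Qed.

Lemma iter_Tinv_T_ge s t x :
  (t <= s)%nat -> Nat.iter t Tinv (Nat.iter s T x) = Nat.iter (s - t) T x.
Proof.
  intro H; replace (Nat.iter s T x) with (Nat.iter (t + (s - t)) T x) by (f_equal; lia).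
  rewrite Nat.iter_add, iter_cancel; auto; apply HT.
Qed.

(** * Marks along backward orbits *)

Section Construction.
Variables (E : nat -> set X) (Z : set X).
Hypothesis HE : forall k, M (E k).
Hypothesis HEpos : forall k, 0 < mu (E k).
Hypothesis HEsmall : forall k, mu (E k) <= (1/2) ^ S k.
Hypothesis HEdis : forall i j x, i <> j -> E i x -> E j x -> False.
Hypothesis HZ : M Z.
Hypothesis HZpos : 0 < mu Z.
Hypothesis HZE : forall k x, E k x -> Z x -> False.

Definition period (k : nat) : nat := 2 ^ S k.
Definition weight (k : nat) : nat := S k * period k.

Lemma period_pos k : (1 <= period k)%nat.
Proof. unfold period; pose proof (Nat.pow_le_mono_r 2 0 (S k)); simpl in *; lia. Qed.

(* [0] when the backward orbit of [x] never meets [E k]. *)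
Definition last_visit (k : nat) (x : X) : nat := nat_min (fun p => E k (Nat.iter p Tinv x)).

Definition periodic_mark (k : nat) (x : X) : Prop :=
  (period k <= last_visit k x)%nat /\ last_visit k x mod period k = O.

Definition marked (k : nat) (x : X) : Prop := E k x \/ periodic_mark k x.

Lemma nat_measurable_last_visit k : nat_measurable (last_visit k).
Proof.
  apply (nat_measurable_nat_min (fun x p => E k (Nat.iter p Tinv x))).
  intro p; apply M_iter_pre; auto using Tinv_meas.
Qed.

Lemma M_periodic_mark k : M (periodic_mark k).
Proof.
  apply (M_ext (fun x => exists v, last_visit k x = v /\
                                   (period k <= v)%nat /\ v mod period k = O)).
  - measurable; apply nat_measurable_last_visit.
  - intro x; split; [intros [v [<- H]]; auto | intro H; eauto].
Qed.

Lemma M_marked k : M (marked k).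
Proof. apply M_or; auto using M_periodic_mark. Qed.
#[local] Hint Resolve M_marked : measurable.

Lemma last_visit_iter k y i :
  (exists p, E k (Nat.iter p Tinv y)) -> (i <= last_visit k y)%nat ->
  last_visit k (Nat.iter i Tinv y) = (last_visit k y - i)%nat.
Proof.
  intros Hvis Hi; destruct (nat_min_spec _ Hvis) as [H1 H2]; fold (last_visit k y) in H1, H2.
  apply nat_min_eq.
  - rewrite <- Nat.iter_add, Nat.sub_add; auto.
  - intros q Hq; rewrite <- Nat.iter_add; apply H2; lia.
Qed.

Lemma last_visit_pos k y : (1 <= last_visit k y)%nat -> exists p, E k (Nat.iter p Tinv y).
Proof.
  intro H; apply NNPP; intro Hn; unfold last_visit in H; rewrite nat_min_none in H; auto; lia.
Qed.

Lemma marked_in_window k y :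
  (exists p, E k (Nat.iter p Tinv y)) -> exists i, (i < period k)%nat /\ marked k (Nat.iter i Tinv y).
Proof.
  intros Hvis; pose proof (period_pos k) as Hu.
  destruct (nat_min_spec _ Hvis) as [Hlast _]; fold (last_visit k y) in Hlast.
  destruct (Nat.lt_ge_cases (last_visit k y) (period k)) as [Hlt|Hge].
  - exists (last_visit k y); split; auto; left; auto.
  - set (r := (last_visit k y mod period k)%nat).
    pose proof (Nat.div_mod_eq (last_visit k y) (period k)) as Hdiv.
    pose proof (Nat.mod_upper_bound (last_visit k y) (period k) ltac:(lia)) as Hr.
    assert (Hq : (1 <= last_visit k y / period k)%nat) by (apply Nat.div_le_lower_bound; lia).
    exists r; split; auto; right; unfold periodic_mark.
    rewrite last_visit_iter by (auto; lia).
    replace (last_visit k y - r)%nat with (last_visit k y / period k * period k)%nat by lia.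
    split; [nia | apply Nat.Div0.mod_mul].
Qed.

Lemma multiples_gap p d w : (0 < d < w)%nat -> (d <= p)%nat ->
  p mod w = O -> (p - d) mod w = O -> False.
Proof.
  intros Hd Hdp Hp Hpd.
  rewrite <- (Nat.sub_add d p Hdp), Nat.Div0.add_mod, Hpd, Nat.add_0_l, Nat.Div0.mod_mod,
    Nat.mod_small in Hp; lia.
Qed.

Lemma mu_periodic_mark k : mu (periodic_mark k) <= (1/2) ^ S k.
Proof.
  pose proof (period_pos k) as Hu.
  set (A := fun i x => periodic_mark k (Nat.iter i Tinv x)).
  assert (Hdis : forall i j x, (i < j < period k)%nat -> A i x -> A j x -> False).
  { intros i j x Hij [Hi Hi0] [Hj Hj0]; set (z := Nat.iter i Tinv x) in *.
    replace (Nat.iter j Tinv x) with (Nat.iter (j - i) Tinv z) in Hj, Hj0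
      by (unfold z; rewrite <- Nat.iter_add; f_equal; lia).
    rewrite last_visit_iter in Hj0; [|apply last_visit_pos; lia | lia].
    apply (multiples_gap (last_visit k z) (j - i) (period k)); auto; lia. }
  pose proof (mu_disjoint_copies A (pred (period k)) (mu (periodic_mark k))) as Hcopies.
  rewrite Nat.succ_pred_pos in Hcopies by lia.
  assert (Hper : INR (period k) = 2 ^ S k) by (unfold period; rewrite pow_INR; auto).
  rewrite Hper in Hcopies; rewrite Rdiv_1_l, pow_inv.
  assert (0 < 2 ^ S k) by (apply pow_lt; lra).
  apply (Rmult_le_reg_l (2 ^ S k)); auto; rewrite Rinv_r by lra.
  apply Hcopies.
  - intro i; apply M_iter_pre; auto using Tinv_meas, M_periodic_mark.
  - intro i; apply mu_iter_pre; auto using Tinv_meas, Tinv_preserving, M_periodic_mark.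
  - intros i j x Hi Hj Hij Hix Hjx.
    destruct (proj1 (Nat.lt_gt_cases i j) Hij); [apply (Hdis i j x) | apply (Hdis j i x)];
      auto; lia.
Qed.

Lemma mu_marked k : mu (marked k) <= (1/2) ^ k.
Proof.
  eapply Rle_trans; [apply mu_union_le; auto using M_periodic_mark|].
  pose proof (HEsmall k); pose proof (mu_periodic_mark k); simpl in *; lra.
Qed.

Definition unmarked_from (K : nat) (x : X) : Prop := forall k, (K <= k)%nat -> ~ marked k x.
Definition finitely_marked (x : X) : Prop := exists K, unmarked_from K x.

Lemma M_unmarked_from K : M (unmarked_from K).
Proof. unfold unmarked_from; measurable. Qed.

Lemma ae_finitely_marked : ae M mu finitely_marked.
Proof. apply borel_cantelli_geometric; auto using M_marked, mu_marked. Qed.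

Definition mark_weight_upto (K : nat) (x : X) : nat :=
  nsum (fun k => weight k * indicator (marked k x))%nat K.

(* [0] on the null set of infinitely marked points. *)
Definition mark_weight (x : X) : nat := mark_weight_upto (nat_min (fun K => unmarked_from K x)) x.

Lemma mark_weight_upto_stable K K' x :
  unmarked_from K x -> (K <= K')%nat -> mark_weight_upto K' x = mark_weight_upto K x.
Proof.
  intros HK HKK'; induction HKK' as [|K' HKK' IH]; auto.
  unfold mark_weight_upto in *; simpl; rewrite IH; unfold indicator.
  destruct (excluded_middle_informative _) as [Hm|]; [exfalso; apply (HK K'); auto | lia].
Qed.

Lemma mark_weight_eq K x : unmarked_from K x -> mark_weight x = mark_weight_upto K x.
Proof.
  intro HK; destruct (nat_min_spec (fun K => unmarked_from K x) ltac:(eauto)) as [Hmin _].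
  unfold mark_weight; set (K0 := nat_min _) in *.
  destruct (Nat.le_ge_cases K0 K); [symmetry|]; apply mark_weight_upto_stable; auto.
Qed.

Lemma mark_weight_ge k x : finitely_marked x -> marked k x -> (weight k <= mark_weight x)%nat.
Proof.
  intros [K HK] Hk; rewrite (mark_weight_eq (Nat.max K (S k)))
    by (intros k' Hk'; apply HK; lia).
  eapply Nat.le_trans; [|apply (nsum_ge_term _ _ k); lia]; simpl.
  unfold indicator; destruct (excluded_middle_informative _); [lia | contradiction].
Qed.

Lemma nat_measurable_mark_weight : nat_measurable mark_weight.
Proof.
  apply (nat_measurable_index (fun x => nat_min (fun K => unmarked_from K x)) mark_weight_upto).
  - apply (nat_measurable_nat_min (fun x K => unmarked_from K x)), M_unmarked_from.
  - intro K; apply (nat_measurable_nsum (fun k x => weight k * indicator (marked k x))%nat).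
    intro k; apply (nat_measurable_op Nat.mul); [apply nat_measurable_const|].
    apply nat_measurable_indicator, M_marked.
Qed.

Lemma backward_mark_weight_lb k y :
  (forall N, exists t, (N <= t)%nat /\ E k (Nat.iter t Tinv y)) ->
  (forall i, finitely_marked (Nat.iter i Tinv y)) ->
  forall q, (q * weight k <= nsum (fun i => mark_weight (Nat.iter i Tinv y)) (q * period k))%nat.
Proof.
  intros Hvis Hfin q; induction q as [|q IH]; [simpl; lia|].
  replace (S q * period k)%nat with (q * period k + period k)%nat by lia; rewrite nsum_add.
  set (z := Nat.iter (q * period k) Tinv y).
  assert (Hz : exists p, E k (Nat.iter p Tinv z)).
  { destruct (Hvis (q * period k)%nat) as [t [Ht Et]]; exists (t - q * period k)%nat.
    unfold z; rewrite <- Nat.iter_add, Nat.sub_add; auto. }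
  destruct (marked_in_window k z Hz) as [i [Hi Hmark]].
  replace (Nat.iter i Tinv z) with (Nat.iter (q * period k + i) Tinv y) in Hmark
    by (unfold z; rewrite <- Nat.iter_add; f_equal; lia).
  pose proof (mark_weight_ge k _ (Hfin _) Hmark).
  pose proof (nsum_ge_term (fun j => mark_weight (Nat.iter (q * period k + j) Tinv y)) _ _ Hi).
  simpl in *; lia.
Qed.

Lemma backward_mark_weight_lb_R k y :
  (forall N, exists t, (N <= t)%nat /\ E k (Nat.iter t Tinv y)) ->
  (forall i, finitely_marked (Nat.iter i Tinv y)) ->
  forall n, INR (S k) * (INR n - INR (period k)) <= INR (nsum (fun i => mark_weight (Nat.iter i Tinv y)) n).
Proof.
  intros Hvis Hfin n; pose proof (period_pos k) as Hu.
  set (q := (n / period k)%nat).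
  pose proof (Nat.div_mod_eq n (period k)); pose proof (Nat.mod_upper_bound n (period k) ltac:(lia)).
  assert (Hqn : (q * period k <= n < q * period k + period k)%nat) by (unfold q; lia).
  pose proof (backward_mark_weight_lb k y Hvis Hfin q) as Hq.
  pose proof (nsum_mono (fun i => mark_weight (Nat.iter i Tinv y)) _ _ (proj1 Hqn)).
  assert (Hle : (q * weight k <= nsum (fun i => mark_weight (Nat.iter i Tinv y)) n)%nat) by lia.
  apply le_INR in Hle; unfold weight in Hle; rewrite !mult_INR in Hle.
  assert (INR n < INR q * INR (period k) + INR (period k))
    by (rewrite <- mult_INR, <- plus_INR; apply lt_INR; lia).
  pose proof (pos_INR (S k)); nra.
Qed.

Lemma forward_mark_weight_lb_R k x :
  (forall N, exists t, (N <= t)%nat /\ E k (Nat.iter t Tinv x)) ->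
  (forall i, finitely_marked (Nat.iter i T x) /\ finitely_marked (Nat.iter i Tinv x)) ->
  forall n, INR (S k) * (INR n - INR (period k)) <= INR (nsum (fun i => mark_weight (Nat.iter i T x)) n).
Proof.
  intros Hvis Hfin [|n].
  - change (nsum (fun i => mark_weight (Nat.iter i T x)) 0) with O; rewrite INR_0.
    pose proof (pos_INR (period k)); pose proof (pos_INR (S k)); nra.
  - set (y := Nat.iter n T x).
    rewrite nsum_rev, (nsum_ext _ (fun i => mark_weight (Nat.iter i Tinv y))).
    + apply backward_mark_weight_lb_R.
      * intro N; destruct (Hvis N) as [t [Ht Et]]; exists (t + n)%nat; split; [lia|].
        unfold y; rewrite iter_Tinv_T_le, Nat.add_sub by lia; auto.
      * intro i; unfold y; destruct (Nat.le_gt_cases i n).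
        -- rewrite iter_Tinv_T_ge by lia; apply Hfin.
        -- rewrite iter_Tinv_T_le by lia; apply Hfin.
    + intros i Hi; unfold y; rewrite iter_Tinv_T_ge by lia; do 2 f_equal; lia.
Qed.

(** * The counterexample *)

Definition deep (j : nat) (y : X) : Prop := exists i, (j <= i)%nat /\ E i y.

Definition level (y : X) : nat := nat_min (fun j => E j y).

(* [0] unless [T y] lies in some [E j] (then [level (T y) = j]); in that case
   the time since the backward orbit of [y] last met [deep j]. *)
Definition return_time (y : X) : nat :=
  indicator (exists j, E j (T y)) * nat_min (fun p => deep (level (T y)) (Nat.iter p Tinv y)).

Definition transfer (y : X) : nat :=
  nsum (fun i => mark_weight (Nat.iter (S i) Tinv y)) (return_time y)
  + return_time y * return_time y.

Definition counterexample (x : X) : R :=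
  INR (mark_weight x) + INR (transfer x) - INR (transfer (T x)).

Lemma deep_mono j j' y : (j <= j')%nat -> deep j' y -> deep j y.
Proof. intros H [i [Hi Ei]]; exists i; split; auto; lia. Qed.

Lemma level_eq j y : E j y -> level y = j.
Proof. intro Hj; apply nat_min_eq; auto; intros q Hq Eq; apply (HEdis q j y); auto; lia. Qed.

Lemma return_time_deep j y :
  E j (T y) -> return_time y = nat_min (fun p => deep j (Nat.iter p Tinv y)).
Proof.
  intro Hj; unfold return_time, indicator; rewrite (level_eq j) by auto.
  destruct (excluded_middle_informative _) as [_|Hn]; [lia | exfalso; eauto].
Qed.

Lemma return_time_none y : (forall j, ~ E j (T y)) -> return_time y = O.
Proof.
  intro Hn; unfold return_time, indicator.
  destruct (excluded_middle_informative _) as [[j Hj]|_]; [exfalso; eapply Hn; eauto | auto].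
Qed.

Lemma nat_measurable_return_time : nat_measurable return_time.
Proof.
  apply (nat_measurable_op Nat.mul).
  - apply nat_measurable_indicator; measurable; apply T_meas; auto.
  - apply (nat_measurable_index (fun y => level (T y))
             (fun j y => nat_min (fun p => deep j (Nat.iter p Tinv y)))).
    + apply (nat_measurable_iter T level 1 T_meas), (nat_measurable_nat_min (fun y j => E j y)).
      auto.
    + intro j; apply (nat_measurable_nat_min (fun y p => deep j (Nat.iter p Tinv y))).
      intro p; apply (M_iter_pre Tinv p (deep j) Tinv_meas); unfold deep; measurable.
Qed.

Lemma nat_measurable_transfer : nat_measurable transfer.
Proof.
  apply (nat_measurable_index return_time
           (fun m y => nsum (fun i => mark_weight (Nat.iter (S i) Tinv y)) m + m * m)%nat).
  - apply nat_measurable_return_time.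
  - intro m; apply (nat_measurable_op Nat.add); [|apply nat_measurable_const].
    apply (nat_measurable_nsum (fun i y => mark_weight (Nat.iter (S i) Tinv y))); intro i.
    apply nat_measurable_iter; auto using Tinv_meas, nat_measurable_mark_weight.
Qed.

Lemma measurable_counterexample : measurable_fun M counterexample.
Proof.
  apply (measurable_fun_index mark_weight
           (fun p x => INR p + INR (transfer x) - INR (transfer (T x)))).
  { apply nat_measurable_mark_weight. }
  intro p; apply (measurable_fun_index transfer (fun g x => INR p + INR g - INR (transfer (T x)))).
  { apply nat_measurable_transfer. }
  intro g; apply (measurable_fun_index (fun x => transfer (T x)) (fun g' _ => INR p + INR g - INR g')).
  - apply (nat_measurable_iter T transfer 1 T_meas nat_measurable_transfer).
  - intro; apply measurable_fun_const.
Qed.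

Lemma birk_sum_forward n x : birk_sum T counterexample n x =
  INR (nsum (fun i => mark_weight (Nat.iter i T x)) n) + INR (transfer x) - INR (transfer (Nat.iter n T x)).
Proof.
  induction n as [|n IH]; [simpl; lra|].
  simpl birk_sum; simpl nsum; rewrite IH, plus_INR; unfold counterexample; simpl; lra.
Qed.

Lemma birk_sum_backward n x : birk_sum Tinv counterexample (S n) x =
  INR (nsum (fun i => mark_weight (Nat.iter i Tinv x)) (S n))
  + INR (transfer (Nat.iter n Tinv x)) - INR (transfer (T x)).
Proof.
  induction n as [|n IH]; [simpl; unfold counterexample; lra|].
  change (birk_sum Tinv counterexample (S (S n)) x)
    with (birk_sum Tinv counterexample (S n) x + counterexample (Nat.iter (S n) Tinv x)).
  change (nsum (fun i => mark_weight (Nat.iter i Tinv x)) (S (S n))) with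
    (nsum (fun i => mark_weight (Nat.iter i Tinv x)) (S n) + mark_weight (Nat.iter (S n) Tinv x))%nat.
  rewrite IH, plus_INR; unfold counterexample; rewrite Nat.iter_succ; destruct HT as [-> _]; lra.
Qed.

Lemma transfer_ge j n y :
  E j (T y) -> (exists p, deep j (Nat.iter p Tinv y)) ->
  (forall p, (p < n)%nat -> ~ deep j (Nat.iter p Tinv y)) ->
  (nsum (fun i => mark_weight (Nat.iter (S i) Tinv y)) n + n * n <= transfer y)%nat.
Proof.
  intros Hj Hvis Hnone; unfold transfer; rewrite (return_time_deep j) by auto.
  destruct (nat_min_spec _ Hvis) as [Hmin _]; set (m := nat_min _) in *.
  assert (Hnm : (n <= m)%nat).
  { destruct (Nat.le_gt_cases n m) as [|Hlt]; auto; exfalso; exact (Hnone m Hlt Hmin). }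
  pose proof (nsum_mono (fun i => mark_weight (Nat.iter (S i) Tinv y)) _ _ Hnm).
  pose proof (Nat.mul_le_mono _ _ _ _ Hnm Hnm); lia.
Qed.

Definition typical (x : X) : Prop :=
  (forall k N, exists t, (N <= t)%nat /\ E k (Nat.iter t Tinv x)) /\
  (forall k N, exists t, (N <= t)%nat /\ E k (Nat.iter t T x)) /\
  (forall N, exists t, (N <= t)%nat /\ Z (Nat.iter t T x)) /\
  (forall i, finitely_marked (Nat.iter i T x) /\ finitely_marked (Nat.iter i Tinv x)).

Lemma ae_typical : ae M mu typical.
Proof.
  apply ae_and; [|apply ae_and; [|apply ae_and]].
  - apply ae_forall; intro k.
    apply ergodic_recurrence; auto using Tinv_meas, Tinv_preserving, Tinv_ergodic.
  - apply ae_forall; intro k; apply ergodic_recurrence; auto using T_meas.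
  - apply ergodic_recurrence; auto using T_meas.
  - apply ae_forall; intro i; apply ae_and; apply ae_iter_pre;
      auto using T_meas, Tinv_meas, Tinv_preserving, ae_finitely_marked.
Qed.

Lemma typical_backward_avg_diverges x : typical x ->
  forall K, exists N, forall n, (N <= n)%nat -> (1 <= n)%nat -> K < avg Tinv counterexample n x.
Proof.
  intros [Hback [_ [_ Hfin]]] K; destruct (exists_nat_ge K) as [k Hk].
  exists (S (S k * period k + transfer (T x))); intros [|n] Hn _; [lia|].
  apply avg_gt; [lia|]; rewrite birk_sum_backward.
  pose proof (backward_mark_weight_lb_R k x (Hback k) (fun i => proj2 (Hfin i)) (S n)) as Hlb.
  apply le_INR in Hn; rewrite S_INR, plus_INR, mult_INR in Hn.
  pose proof (pos_INR (transfer (Nat.iter n Tinv x))); pose proof (pos_INR (period k)).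
  pose proof (pos_INR k); pose proof (pos_INR n); rewrite !S_INR in *.
  assert (K * (INR n + 1) <= INR k * (INR n + 1)) by (apply Rmult_le_compat_r; lra).
  replace ((INR k + 1) * (INR n + 1 - INR (period k)))
    with (INR k * (INR n + 1) + (INR n + 1) - (INR k + 1) * INR (period k)) in Hlb by ring.
  lra.
Qed.

Lemma typical_forward_avg_unbounded_above x : typical x ->
  forall K N, exists n, (N <= n)%nat /\ (1 <= n)%nat /\ K < avg T counterexample n x.
Proof.
  intros [Hback [_ [HZrec Hfin]]] K N; destruct (exists_nat_ge K) as [k Hk].
  destruct (HZrec (S (S (N + S k * period k)))) as [t [Ht Zt]].
  set (n := pred t).
  exists n; split; [unfold n; lia | split; [unfold n; lia|]].
  apply avg_gt; [unfold n; lia|]; rewrite birk_sum_forward.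
  assert (Htransfer0 : transfer (Nat.iter n T x) = O).
  { unfold transfer; rewrite return_time_none; auto.
    intros j Ej; rewrite <- Nat.iter_succ in Ej; unfold n in Ej.
    rewrite Nat.succ_pred_pos in Ej by lia; eauto. }
  rewrite Htransfer0; pose proof (forward_mark_weight_lb_R k x (Hback k) Hfin n) as Hlb.
  assert (Hn : (N + S k * period k + 1 <= n)%nat) by (unfold n; lia).
  apply le_INR in Hn; rewrite !plus_INR, mult_INR in Hn.
  pose proof (pos_INR (transfer x)); pose proof (pos_INR (period k)); pose proof (pos_INR k).
  pose proof (pos_INR N); pose proof (pos_INR n); rewrite S_INR in *; simpl INR in *.
  assert (K * INR n <= INR k * INR n) by (apply Rmult_le_compat_r; lra).
  replace ((INR k + 1) * (INR n - INR (period k)))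
    with (INR k * INR n + INR n - (INR k + 1) * INR (period k)) in Hlb by ring.
  lra.
Qed.

Lemma deep_avoid_orbit x B : exists k0, forall t, (t <= B)%nat -> ~ deep k0 (Nat.iter t T x).
Proof.
  assert (Hpoint : forall y, exists k0, ~ deep k0 y).
  { intro y; destruct (classic (exists j, E j y)) as [[j Hj]|Hn].
    - exists (S j); intros [i [Hi Ei]]; apply (HEdis i j y); auto; lia.
    - exists O; intros [i [_ Ei]]; eauto. }
  induction B as [|B [k0 IH]].
  - destruct (Hpoint x) as [k0 Hk0]; exists k0; intros t Ht; replace t with O by lia; auto.
  - destruct (Hpoint (Nat.iter (S B) T x)) as [k1 Hk1]; exists (Nat.max k0 k1).
    intros t Ht Hdeep; destruct (Nat.eq_dec t (S B)) as [->|].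
    + apply Hk1, (deep_mono _ (Nat.max k0 k1)); auto; lia.
    + apply (IH t), (deep_mono _ (Nat.max k0 k1)); auto; lia.
Qed.

Lemma typical_forward_avg_unbounded_below x : typical x ->
  forall K N, exists n, (N <= n)%nat /\ (1 <= n)%nat /\ avg T counterexample n x < K.
Proof.
  intros [Hback [Hfwd _]] K N; destruct (exists_nat_ge (- K)) as [k Hk].
  set (B := (N + k + transfer x + 1)%nat).
  destruct (deep_avoid_orbit x B) as [k0 Hk0].
  destruct (ex_least (fun t => (1 <= t)%nat /\ deep k0 (Nat.iter t T x))) as [t0 [[Ht0 Hdeep] Hmin]].
  { destruct (Hfwd k0 1%nat) as [t [Ht Et]]; exists t; split; [|exists k0; split]; auto. }
  assert (HtB : (B < t0)%nat).
  { destruct (Nat.le_gt_cases t0 B); auto; exfalso; eapply Hk0; eauto. }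
  set (n := pred t0); set (y := Nat.iter n T x).
  destruct Hdeep as [j [Hj Ej]].
  assert (HTy : E j (T y)) by (unfold y, n; rewrite <- Nat.iter_succ, Nat.succ_pred_pos; auto; lia).
  assert (Htransfer : (nsum (fun i => mark_weight (Nat.iter i T x)) n + n * n <= transfer y)%nat).
  { erewrite nsum_rev, nsum_ext; [apply (transfer_ge j n y HTy)|].
    - destruct (Hback j O) as [t [_ Et]]; exists (t + n)%nat.
      unfold y; rewrite iter_Tinv_T_le, Nat.add_sub by lia; exists j; split; auto.
    - intros p Hp Hdp; unfold y in Hdp; rewrite iter_Tinv_T_ge in Hdp by lia.
      apply (Hmin (n - p)%nat); [unfold n; lia | split; [lia | eapply deep_mono; eauto]].
    - intros i Hi; unfold y; rewrite iter_Tinv_T_ge by lia; do 2 f_equal; lia. }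
  exists n; split; [unfold n, B in *; lia | split; [unfold n, B in *; lia|]].
  apply avg_lt; [unfold n, B in *; lia|]; rewrite birk_sum_forward; fold y.
  apply le_INR in Htransfer; rewrite plus_INR, mult_INR in Htransfer.
  assert (Hn : (k + transfer x + 1 <= n)%nat) by (unfold n, B in *; lia).
  apply le_INR in Hn; rewrite !plus_INR in Hn; simpl INR in Hn.
  pose proof (pos_INR (transfer x)); pose proof (pos_INR k);
    pose proof (pos_INR (nsum (fun i => mark_weight (Nat.iter i T x)) n)); nra.
Qed.

End Construction.
End Invertible.
End Measure.

Theorem proposition1 (X : Type) (M : set X -> Prop) (mu : set X -> R)
  (T Tinv : X -> X)
  (HM : sigma_algebra M) (Hmu : probability_measure M mu) (Hna : non_atomic M mu)
  (HT : invertible_with M T Tinv) (Hmp : measure_preserving M mu T)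
  (Herg : ergodic M mu T) :
  exists f : X -> R, measurable_fun M f /\
    ae M mu (fun x =>
      (* limsup_n A_n^+ f (x) = +oo *)
      (forall K : R, forall N : nat, exists n : nat,
         (N <= n)%nat /\ (1 <= n)%nat /\ K < avg T f n x) /\
      (* liminf_n A_n^+ f (x) = -oo *)
      (forall K : R, forall N : nat, exists n : nat,
         (N <= n)%nat /\ (1 <= n)%nat /\ avg T f n x < K) /\
      (* lim_n A_n^- f (x) = +oo *)
      (forall K : R, exists N : nat, forall n : nat,
         (N <= n)%nat -> (1 <= n)%nat -> K < avg Tinv f n x)).
Proof.
  destruct (non_atomic_small_disjoint_sets X M mu HM Hmu Hna)
    as (E & Z & HE & HEpos & HEsmall & HEdis & HZ & HZpos & HZE).
  exists (counterexample X T Tinv E); split.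
  - eapply measurable_counterexample; eauto.
  - eapply ae_impl; [eapply ae_typical; eauto |].
    intros x Hx; repeat split.
    + eapply typical_forward_avg_unbounded_above; eauto.
    + eapply typical_forward_avg_unbounded_below; eauto.
    + eapply typical_backward_avg_diverges; eauto.
Qed.
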